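(* Let $\Omega\subseteq\mathbb{C}$ be a domain, let $\omega\in H(\Omega)$ and let $\varphi:\Omega\to\Omega$ be holomorphic. Then the weighted composition operator $C_{\omega,\varphi}:H(\Omega)\to H(\Omega)$, $f\mapsto\omega\cdot(f\circ\varphi)$, does not support a supercyclic algebra.
   Context: $H(\Omega)$ is the Fréchet algebra of holomorphic functions on $\Omega$ with the compact-open topology. A vector $f$ is supercyclic for an operator $T$ if $\{\lambda T^nf:\lambda\in\mathbb{C},n\ge0\}$ is dense. $T$ supports a supercyclic algebra if there is a subalgebra $A\ne\{0\}$ of $H(\Omega)$ all of whose nonzero elements are supercyclic for $T$. *)

From Stdlib Require Import Reals List.
From Coquelicot Require Import Coquelicot.
Open Scope C_scope.

Definition connected_set (D : C -> Prop) : Prop :=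
  forall U V : C -> Prop, open U -> open V ->
    (forall z, D z -> U z \/ V z) ->
    (exists z, D z /\ U z) -> (exists z, D z /\ V z) ->
    exists z, D z /\ U z /\ V z.

Definition is_domain (D : C -> Prop) : Prop :=
  open D /\ connected_set D /\ exists z, D z.

(* Complex differentiability at every point of D. Elements of H(D) are
   represented by total functions C -> C, only their values on D matter. *)
Definition holomorphic_on (D : C -> Prop) (f : C -> C) : Prop :=
  forall z, D z -> @ex_derive C_AbsRing C_NormedModule f z.

Definition compact_set (K : C -> Prop) : Prop :=
  forall (I : Type) (U : I -> C -> Prop),
    (forall i, open (U i)) -> (forall z, K z -> exists i, U i z) ->
    exists l : list I, forall z, K z -> exists i, In i l /\ U i z.

Definition wcomp (w phi : C -> C) (f : C -> C) : C -> C :=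
  fun z => w z * f (phi z).

(* f is supercyclic for T on H(D): {lambda T^n f} is dense in H(D) for the
   compact-open topology, i.e. every g in H(D) is approximated uniformly on
   every compact subset of D. *)
Definition supercyclic (D : C -> Prop) (T : (C -> C) -> (C -> C))
    (f : C -> C) : Prop :=
  forall g : C -> C, holomorphic_on D g ->
  forall K : C -> Prop, compact_set K -> (forall z, K z -> D z) ->
  forall eps : R, (0 < eps)%R ->
  exists (lam : C) (n : nat), forall z, K z ->
    (Cmod (lam * Nat.iter n T f z - g z) < eps)%R.

(* Subalgebra of H(D) (not required to be unital). *)
Definition subalgebra_H (D : C -> Prop) (A : (C -> C) -> Prop) : Prop :=
  (forall f, A f -> holomorphic_on D f) /\
  A (fun _ => 0) /\
  (forall f g, A f -> A g -> A (fun z => f z + g z)) /\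
  (forall (c : C) f, A f -> A (fun z => c * f z)) /\
  (forall f g, A f -> A g -> A (fun z => f z * g z)).

Definition nonzero_on (D : C -> Prop) (f : C -> C) : Prop :=
  exists z, D z /\ f z <> 0.

Definition supports_supercyclic_algebra (D : C -> Prop)
    (T : (C -> C) -> (C -> C)) : Prop :=
  exists A : (C -> C) -> Prop,
    subalgebra_H D A /\ (exists f, A f /\ nonzero_on D f) /\
    forall f, A f -> nonzero_on D f -> supercyclic D T f.

(* If the weight vanishes at some p in Omega, every orbit vanishes at p after
   one step, so near p only the line C f is available, and a line cannot
   approximate functions with prescribed values at two points.

   Otherwise, for a nonzero f in the algebra, f^2 is supercyclic, and
   T^n (f^2) = W_n (f o phi^n)^2 where the weight W_n has no zeros. So it suffices
   that u F^2 cannot be uniformly within r/2 of z - z0 on a circle |z - z0| = r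
   when u is continuous and zero-free on the disc (the paper uses Hurwitz's
   theorem here). Deforming the circle to its centre shows that the antipodal
   ratio u(z0 - v)/u(z0 + v), v = r e^(it), 0 <= t <= pi, has a continuous square
   root sigma with sigma(0) sigma(pi) = 1. Then sigma F(z0 - v)/F(z0 + v) is such
   a square root of (u F^2)(z0 - v)/(u F^2)(z0 + v), which is close to -1; but a
   path in the region Re(x^2) < 0 stays in one of its two components, where the
   product of two values has negative real part. *)

From Stdlib Require Import Reals Lra Lia Classical ClassicalEpsilon List.
From Coquelicot Require Import Coquelicot.
Open Scope C_scope.

(* Coquelicot gives [C] two uniform structures: the product one
   ([C_UniformSpace], used for [open] and for [continuous] below) and the [Cmod]
   one of [C_AbsRing] (used by [ex_derive] and [continuous_mult]). They have the
   same neighbourhoods. *)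
Lemma continuous_C_AbsRing {U : UniformSpace} (f : U -> C) (x : U) :
  @continuous U C_UniformSpace f x <->
  @continuous U (AbsRing_UniformSpace C_AbsRing) f x.
Proof. split; intros Hf P HP; apply Hf, locally_C, HP. Qed.

Lemma holomorphic_continuous (f : C -> C) (z : C) :
  @ex_derive C_AbsRing C_NormedModule f z -> continuous f z.
Proof.
  intros Hf P HP. apply locally_C, (ex_derive_continuous f z Hf), HP.
Qed.

Lemma continuous_Cplus {U : UniformSpace} (f g : U -> C) (x : U) :
  continuous f x -> continuous g x -> continuous (fun y => f y + g y) x.
Proof. apply (continuous_plus (V := C_NormedModule)). Qed.

Lemma continuous_Cmult {U : UniformSpace} (f g : U -> C) (x : U) :
  continuous f x -> continuous g x -> continuous (fun y => f y * g y) x.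
Proof. rewrite !continuous_C_AbsRing. apply (continuous_mult (K := C_AbsRing)). Qed.

Lemma continuous_Rmult {U : UniformSpace} (f g : U -> R) (x : U) :
  continuous f x -> continuous g x -> continuous (fun y => f y * g y)%R x.
Proof. apply (continuous_mult (K := R_AbsRing)). Qed.

Lemma continuous_Rplus {U : UniformSpace} (f g : U -> R) (x : U) :
  continuous f x -> continuous g x -> continuous (fun y => f y + g y)%R x.
Proof. apply (continuous_plus (V := R_NormedModule)). Qed.

Lemma filter_prod_of_locally {U V : UniformSpace} (a : U) (b : V)
    (P : U * V -> Prop) :
  locally (a, b) P -> filter_prod (locally a) (locally b) P.
Proof.
  intros [eps H]. exists (ball a eps) (ball b eps); try apply locally_ball.
  intros x y Hx Hy. apply H. split; assumption.
Qed.

Lemma continuous_C {U : UniformSpace} (f : U -> C) (x : U) :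
  continuous (fun y => Re (f y)) x -> continuous (fun y => Im (f y)) x ->
  continuous f x.
Proof.
  intros Hre Him. apply (continuous_ext (fun y => (Re (f y), Im (f y)))).
  { intros y. destruct (f y). reflexivity. }
  intros P HP. exact (filterlim_pair _ _ Hre Him P (filter_prod_of_locally _ _ _ HP)).
Qed.

Lemma continuous_Re (z : C) : continuous Re z.
Proof. destruct z. apply continuous_fst. Qed.

Lemma continuous_Im (z : C) : continuous Im z.
Proof. destruct z. apply continuous_snd. Qed.

Lemma continuous_RtoC {U : UniformSpace} (f : U -> R) (x : U) :
  continuous f x -> continuous (fun y => RtoC (f y)) x.
Proof. intros Hf. apply continuous_C; [exact Hf | apply continuous_const]. Qed.

Lemma continuous_Cmod (z : C) : continuous Cmod z.
Proof.
  apply (continuous_comp (fun y : C => Re y ^ 2 + Im y ^ 2)%R sqrt);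
    [|apply continuous_sqrt].
  simpl. apply continuous_Rplus; repeat apply continuous_Rmult;
    auto using continuous_Re, continuous_Im, continuous_const.
Qed.

Lemma continuous_Cinv (z : C) : z <> 0 -> continuous Cinv z.
Proof.
  intros Hz. set (n := fun y : C => (Re y ^ 2 + Im y ^ 2)%R).
  assert (Hn : n z <> 0%R).
  { intro E. apply Hz. unfold n in E. destruct z as [a b]. simpl in *.
    apply injective_projections; simpl; nra. }
  assert (Hinv : continuous (fun y => / n y)%R z).
  { apply (continuous_comp n Rinv); [|apply continuous_Rinv; exact Hn].
    unfold n; simpl. apply continuous_Rplus; repeat apply continuous_Rmult;
      auto using continuous_Re, continuous_Im, continuous_const. }
  apply continuous_C; simpl; apply continuous_Rmult; auto using continuous_Re.
  apply (continuous_opp (V := R_NormedModule)), continuous_Im.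
Qed.

Lemma continuous_Cdiv {U : UniformSpace} (f g : U -> C) (x : U) :
  continuous f x -> continuous g x -> g x <> 0 ->
  continuous (fun y => f y / g y) x.
Proof.
  intros Hf Hg Hgx. apply continuous_Cmult; [exact Hf|].
  apply (continuous_comp g Cinv); [exact Hg | apply continuous_Cinv, Hgx].
Qed.

Lemma continuous_shift (g : R -> C) (c t : R) :
  continuous g (t + c)%R -> continuous (fun t => g (t + c)%R) t.
Proof.
  apply (continuous_comp (fun t => t + c)%R g), continuous_Rplus;
    [apply continuous_id | apply continuous_const].
Qed.

Lemma continuous_Cmod_lt {U : UniformSpace} (f : U -> C) (x : U) (eps : posreal) :
  continuous f x -> locally x (fun y => Cmod (f y - f x) < eps)%R.
Proof.
  intros Hf. apply (proj1 (filterlim_locally_ball_norm (K := C_AbsRing)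
    (U := C_NormedModule) f (f x)) Hf eps).
Qed.

Lemma open_Cmod_ball (D : C -> Prop) (z : C) :
  open D -> D z -> exists r, (0 < r)%R /\ forall y, (Cmod (y - z) < r)%R -> D y.
Proof.
  intros HD Hz. destruct (HD z Hz) as [r Hr]. exists r. split; [apply cond_pos|].
  intros y Hy. apply Hr, (norm_compat1 (K := C_AbsRing) (V := C_NormedModule)).
  exact Hy.
Qed.

Lemma lebesgue_number_rectangle (a b a' b' : R) (P : (R * R -> Prop) -> Prop) :
  (forall S S' : R * R -> Prop, (forall p, S' p -> S p) -> P S -> P S') ->
  (forall u v, (a <= u <= b)%R -> (a' <= v <= b')%R ->
     exists delta : posreal, P (ball (u, v) delta)) ->
  exists d : posreal, forall x y, (a <= x <= b)%R -> (a' <= y <= b')%R ->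
    P (ball (x, y) d).
Proof.
  intros Hmono Hloc.
  assert (Hdelta : forall p : R * R, exists delta : posreal,
    (a <= fst p <= b)%R -> (a' <= snd p <= b')%R -> P (ball p delta)).
  { intros [u v]. destruct (classic ((a <= u <= b)%R /\ (a' <= v <= b')%R))
      as [[Hu Hv] | Hout].
    - destruct (Hloc u v Hu Hv) as [delta Hd]. exists delta. auto.
    - exists (mkposreal 1 Rlt_0_1). intros Hu Hv. tauto. }
  destruct (choice _ Hdelta) as [delta Hdel].
  assert (Hhalf : forall u v, (0 < delta (u, v) / 2)%R).
  { intros u v. pose proof (cond_pos (delta (u, v))). lra. }
  destruct (compactness_value_2d a b a' b' (fun u v => mkposreal _ (Hhalf u v)))
    as [d Hd].
  exists d. intros x y Hx Hy. apply NNPP. intros HnP.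
  apply (Hd x y Hx Hy). intros [u [v [Hu [Hv [Hxu [Hyv Hdu]]]]]]. simpl in *.
  apply HnP. refine (Hmono _ _ _ (Hdel (u, v) Hu Hv)).
  intros [x' y'] [Hx' Hy']. change (Rabs (x' - x) < d)%R in Hx'.
  change (Rabs (y' - y) < d)%R in Hy'. split.
  - change (Rabs (x' - u) < delta (u, v))%R.
    pose proof (Rabs_triang (x' - x) (x - u)).
    replace (x' - x + (x - u))%R with (x' - u)%R in * by ring. lra.
  - change (Rabs (y' - v) < delta (u, v))%R.
    pose proof (Rabs_triang (y' - y) (y - v)).
    replace (y' - y + (y - v))%R with (y' - v)%R in * by ring. lra.
Qed.

Lemma lebesgue_number_interval (a b : R) (P : (R -> Prop) -> Prop) :
  (forall S S' : R -> Prop, (forall x, S' x -> S x) -> P S -> P S') ->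
  (forall u, (a <= u <= b)%R -> exists delta : posreal, P (ball u delta)) ->
  exists d : posreal, forall x, (a <= x <= b)%R -> P (ball x d).
Proof.
  intros Hmono Hloc.
  destruct (lebesgue_number_rectangle a b 0 0 (fun S => P (fun x => S (x, 0%R))))
    as [d Hd].
  - intros S S' HS. apply Hmono. auto.
  - intros u v Hu _. destruct (Hloc u Hu) as [delta Hdelta]. exists delta.
    refine (Hmono _ _ (fun x Hx => proj1 Hx) Hdelta).
  - exists d. intros x Hx. refine (Hmono _ _ _ (Hd x 0%R Hx ltac:(lra))).
    intros y Hy. split; [exact Hy | apply ball_center].
Qed.

Lemma interval_finite_net (a b d : R) : (a <= b)%R -> (0 < d)%R ->
  exists xs : list R, (forall x, In x xs -> (a <= x <= b)%R) /\
    forall y, (a <= y <= b)%R -> exists x, In x xs /\ (Rabs (y - x) < d)%R.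
Proof.
  intros Hab Hd.
  assert (Hnet : forall N : nat, exists xs : list R,
    (forall x, In x xs -> (a <= x <= b)%R) /\
    forall y, (a <= y <= b)%R -> (y < a + INR N * d)%R ->
      exists x, In x xs /\ (Rabs (y - x) < d)%R).
  { induction N as [|N [xs [Hin Hcov]]].
    - exists nil. split; [contradiction|]. simpl. intros y Hy Hlt. lra.
    - exists (Rmin b (a + INR N * d) :: xs). split.
      + intros x [<- | Hx]; [|auto]. pose proof (pos_INR N).
        split; [apply Rmin_glb; nra | apply Rmin_l].
      + intros y Hy Hlt. rewrite S_INR in Hlt.
        destruct (Rlt_or_le y (a + INR N * d)) as [Hlow | Hhigh].
        * destruct (Hcov y Hy Hlow) as [x [Hx Hyx]]. exists x. simpl. auto.
        * exists (Rmin b (a + INR N * d)). split; [left; reflexivity|].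
          unfold Rmin. destruct (Rle_dec b (a + INR N * d)).
          -- replace y with b by lra. rewrite Rminus_diag, Rabs_R0. exact Hd.
          -- rewrite Rabs_pos_eq; lra. }
  destruct (INR_unbounded ((b - a) / d)) as [N HN].
  destruct (Hnet N) as [xs [Hin Hcov]]. exists xs. split; [exact Hin|].
  intros y Hy. apply Hcov; [exact Hy|].
  apply (Rmult_lt_compat_r d) in HN; [|exact Hd].
  unfold Rdiv in HN. rewrite Rmult_assoc, Rinv_l in HN; lra.
Qed.

Lemma list_choice {A B : Type} (Q : A -> B -> Prop) (xs : list A) :
  (forall x, In x xs -> exists y, Q x y) ->
  exists ys : list B, forall x, In x xs -> exists y, In y ys /\ Q x y.
Proof.
  induction xs as [|x xs IH]; intros Hex.
  - exists nil. contradiction.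
  - destruct (Hex x (or_introl eq_refl)) as [y Hy].
    destruct IH as [ys Hys]; [intros; apply Hex; right; assumption|].
    exists (y :: ys). intros x' [<- | Hx'].
    + exists y. split; [left|]; auto.
    + destruct (Hys x' Hx') as [y' [Hy' HQ]]. exists y'. split; [right|]; auto.
Qed.

Lemma compact_set_image_interval (g : R -> C) (a b : R) : (a <= b)%R ->
  (forall t, (a <= t <= b)%R -> continuous g t) ->
  compact_set (fun z => exists t, (a <= t <= b)%R /\ z = g t).
Proof.
  intros Hab Hg I U HU Hcov.
  destruct (lebesgue_number_interval a b
    (fun S => exists i, forall t, S t -> U i (g t))) as [d Hd].
  - intros S S' HS [i Hi]. exists i. auto.
  - intros u Hu. destruct (Hcov (g u)) as [i Hi]; [exists u; auto|].
    destruct (Hg u Hu (U i) (HU i (g u) Hi)) as [delta Hdelta].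
    exists delta, i. exact Hdelta.
  - destruct (interval_finite_net a b d Hab (cond_pos d)) as [xs [Hin Hnet]].
    destruct (list_choice (fun x i => forall t, ball x d t -> U i (g t)) xs)
      as [l Hl].
    { intros x Hx. apply Hd, Hin, Hx. }
    exists l. intros z [t [Ht ->]].
    destruct (Hnet t Ht) as [x [Hx Htx]].
    destruct (Hl x Hx) as [i [Hi HUi]]. exists i. split; [exact Hi|].
    apply HUi. change (Rabs (t - x) < d)%R. exact Htx.
Qed.

Lemma compact_set_pair (p q : C) : compact_set (fun z => z = p \/ z = q).
Proof.
  intros I U _ Hcov.
  destruct (Hcov p (or_introl eq_refl)) as [i Hi].
  destruct (Hcov q (or_intror eq_refl)) as [j Hj].
  exists (i :: j :: nil). intros z [-> | ->]; [exists i | exists j]; simpl; auto.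
Qed.

Lemma continuous_sign_constant (f : R -> R) (a b : R) : (a <= b)%R ->
  (forall t, (a <= t <= b)%R -> continuous f t /\ f t <> 0%R) ->
  (0 < f a * f b)%R.
Proof.
  intros Hab Hf.
  destruct (Hf a ltac:(lra)) as [_ Hfa].
  destruct (Req_dec a b) as [<- | Hne]; [nra|].
  apply Rnot_le_lt. intros Hsign.
  destruct (Ranalysis5.IVT_interv (fun t => - (f a * f t))%R a b) as [z [Hz Hfz]].
  - intros t Ht. apply continuity_pt_filterlim.
    apply (continuous_opp (V := R_NormedModule) (fun y => f a * f y)%R).
    apply continuous_Rmult; [apply continuous_const | apply Hf, Ht].
  - lra.
  - nra.
  - destruct (Rle_lt_or_eq _ _ Hsign) as [Hlt | Heq]; [lra|].
    exfalso. apply (proj2 (Hf b ltac:(lra))). nra.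
  - apply (proj2 (Hf z Hz)). nra.
Qed.

Lemma Cnonzero_of_Re_pos (x : C) : (0 < Re x)%R -> x <> 0.
Proof. intros Hx E. rewrite E in Hx. simpl in Hx. lra. Qed.

Lemma Re_inv_pos (x : C) : (0 < Re x)%R -> (0 < Re (/ x))%R.
Proof.
  destruct x as [a b]. simpl. intros Ha.
  apply Rdiv_lt_0_compat; [exact Ha | nra].
Qed.

Lemma Csqr_inj_Re_pos (x y : C) :
  (0 < Re x)%R -> (0 < Re y)%R -> x * x = y * y -> x = y.
Proof.
  intros Hx Hy Exy.
  assert (Hsum : x + y <> 0).
  { apply Cnonzero_of_Re_pos. destruct x, y. simpl in *. lra. }
  assert (Hprod : (x - y) * (x + y) = 0).
  { replace ((x - y) * (x + y)) with (x * x - y * y) by ring. rewrite Exy. ring. }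
  destruct (classic (x - y = 0)) as [E | Hne].
  - replace x with ((x - y) + y) by ring. rewrite E. ring.
  - exfalso. exact (Cmult_neq_0 _ _ Hne Hsum Hprod).
Qed.

(* The principal square root; only used, and only correct, for [0 < Re x]. *)
Definition Csqrt (x : C) : C :=
  (x + RtoC (Cmod x)) / RtoC (sqrt (2 * (Cmod x + Re x))).

Lemma Csqrt_denom_pos (x : C) : (0 < Re x)%R -> (0 < sqrt (2 * (Cmod x + Re x)))%R.
Proof. intros Hx. pose proof (Cmod_ge_0 x). apply sqrt_lt_R0. lra. Qed.

Lemma Csqrt_sqr (x : C) : (0 < Re x)%R -> Csqrt x * Csqrt x = x.
Proof.
  intros Hx. unfold Csqrt. pose proof (Csqrt_denom_pos x Hx) as Hs.
  set (s := sqrt (2 * (Cmod x + Re x))) in *.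
  assert (Hss : (s * s = 2 * (Cmod x + Re x))%R).
  { apply sqrt_sqrt. pose proof (Cmod_ge_0 x). lra. }
  assert (Hmod : (Cmod x * Cmod x = Re x * Re x + Im x * Im x)%R).
  { pose proof (Cmod2_alt x). simpl in *. lra. }
  assert (RtoC s <> 0) by (intro E; apply RtoC_inj in E; lra).
  transitivity ((x + RtoC (Cmod x)) * (x + RtoC (Cmod x)) / (RtoC s * RtoC s));
    [field; assumption|].
  assert (E : (x + RtoC (Cmod x)) * (x + RtoC (Cmod x)) = x * (RtoC s * RtoC s)).
  { set (m := Cmod x) in *. destruct x as [a b]. simpl in *.
    apply injective_projections; simpl; nra. }
  rewrite E. field. assumption.
Qed.

Lemma Re_Csqrt_pos (x : C) : (0 < Re x)%R -> (0 < Re (Csqrt x))%R.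
Proof.
  intros Hx. unfold Csqrt. pose proof (Csqrt_denom_pos x Hx) as Hs.
  set (s := sqrt (2 * (Cmod x + Re x))) in *. set (m := Cmod x).
  assert (Hm : (0 <= m)%R) by apply Cmod_ge_0.
  replace (Re ((x + RtoC m) / RtoC s)) with ((Re x + m) / s)%R.
  - apply Rdiv_lt_0_compat; lra.
  - destruct x. simpl. field. lra.
Qed.

Lemma Csqrt_inv (x : C) : (0 < Re x)%R -> Csqrt (/ x) * Csqrt x = 1.
Proof.
  intros Hx. pose proof (Re_Csqrt_pos x Hx) as Hsx.
  assert (Hsqrt_inv : Csqrt (/ x) = / Csqrt x).
  { apply Csqr_inj_Re_pos.
    - apply Re_Csqrt_pos, Re_inv_pos, Hx.
    - apply Re_inv_pos, Hsx.
    - rewrite Csqrt_sqr by (apply Re_inv_pos, Hx).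
      rewrite <- (Csqrt_sqr x Hx) at 1. field. apply Cnonzero_of_Re_pos, Hsx. }
  rewrite Hsqrt_inv. field. apply Cnonzero_of_Re_pos, Hsx.
Qed.

Lemma continuous_Csqrt (x : C) : (0 < Re x)%R -> continuous Csqrt x.
Proof.
  intros Hx. unfold Csqrt. apply continuous_Cdiv.
  - apply continuous_Cplus; [apply continuous_id|].
    apply continuous_RtoC, continuous_Cmod.
  - apply continuous_RtoC.
    apply (continuous_comp (fun y : C => 2 * (Cmod y + Re y))%R sqrt);
      [|apply continuous_sqrt].
    apply continuous_Rmult; [apply continuous_const|].
    apply continuous_Rplus; [apply continuous_Cmod | apply continuous_Re].
  - intro E. apply RtoC_inj in E. pose proof (Csqrt_denom_pos x Hx). lra.
Qed.

Lemma Cdiv_sub_1_lt_half (x v : C) :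
  (Cmod (x - v) < Cmod v / 2)%R -> (Cmod (x / v - 1) < 1 / 2)%R.
Proof.
  intros Hxv.
  assert (Hv : v <> 0)
    by (intro E; subst v; rewrite Cmod_0 in Hxv; pose proof (Cmod_ge_0 (x - 0)); lra).
  replace (x / v - 1) with ((x - v) / v) by (field; exact Hv).
  rewrite Cmod_div by exact Hv. apply Cmod_gt_0 in Hv.
  apply (Rmult_lt_reg_r (Cmod v)); [exact Hv|].
  unfold Rdiv. rewrite Rmult_assoc, Rinv_l by lra. lra.
Qed.

Lemma Cdiv_near_1 (m x y : C) : m <> 0 ->
  (Cmod (x - m) < Cmod m / 5)%R -> (Cmod (y - m) < Cmod m / 5)%R ->
  (Cmod (x / y - 1) < 1 / 2)%R.
Proof.
  intros Hm Hx Hy. apply Cmod_gt_0 in Hm. apply Cdiv_sub_1_lt_half.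
  pose proof (Cmod_triangle (x - m) (- (y - m))) as Hxy.
  pose proof (Cmod_triangle (m - y) y) as Hmy.
  replace (x - m + - (y - m)) with (x - y) in Hxy by ring.
  replace (m - y + y) with m in Hmy by ring.
  replace (m - y) with (- (y - m)) in Hmy by ring.
  rewrite Cmod_opp in Hxy, Hmy. lra.
Qed.

Lemma Cmod_sub_1_bounds (a : C) : (Cmod (a - 1) < 1 / 2)%R ->
  (1 / 2 < Re a)%R /\ (Rabs (Im a) < 1 / 2)%R.
Proof.
  intros Ha. pose proof (Rmax_Cmod (a - 1)) as Hmax.
  destruct a as [a1 a2]. simpl in *. rewrite Ropp_0, Rplus_0_r in Hmax.
  pose proof (Rmax_l (Rabs (a1 + - (1))) (Rabs a2)).
  pose proof (Rmax_r (Rabs (a1 + - (1))) (Rabs a2)).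
  pose proof (Rle_abs (- (a1 + - (1)))). rewrite Rabs_Ropp in *. lra.
Qed.

Lemma Re_div_pos_near_1 (a b : C) :
  (Cmod (a - 1) < 1 / 2)%R -> (Cmod (b - 1) < 1 / 2)%R -> (0 < Re (b / a))%R.
Proof.
  intros Ha Hb.
  destruct (Cmod_sub_1_bounds a Ha) as [Ha1 Ha2].
  destruct (Cmod_sub_1_bounds b Hb) as [Hb1 Hb2].
  apply Rabs_def2 in Ha2. apply Rabs_def2 in Hb2.
  replace (Re (b / a)) with ((Re a * Re b + Im a * Im b) / (Re a ^ 2 + Im a ^ 2))%R.
  - apply Rdiv_lt_0_compat; nra.
  - destruct a as [a1 a2], b as [b1 b2]. simpl in *. field. nra.
Qed.

Lemma Re_div_neg_near_opposite (x y v : C) : v <> 0 ->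
  (Cmod (x / v - 1) < 1 / 2)%R -> (Cmod (y / - v - 1) < 1 / 2)%R ->
  (Re (y / x) < 0)%R.
Proof.
  intros Hv Hx Hy.
  assert (Hx0 : x <> 0).
  { intros E. rewrite E in Hx. replace (0 / v - 1) with (- (1)) in Hx
      by (field; exact Hv).
    rewrite Cmod_opp, Cmod_1 in Hx. lra. }
  pose proof (Re_div_pos_near_1 _ _ Hx Hy) as Hre.
  replace (y / x) with (- ((y / - v) / (x / v))) by (field; split; assumption).
  destruct ((y / - v) / (x / v)). simpl in *. lra.
Qed.

Definition sqrt_path (q : R -> C) (a b : R) : Prop :=
  exists sigma : R -> C,
    (forall t, (a <= t <= b)%R -> continuous sigma t /\ sigma t * sigma t = q t) /\
    sigma a * sigma b = 1.

Lemma sqrt_path_ext (q q' : R -> C) (a b : R) :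
  (forall t, (a <= t <= b)%R -> q t = q' t) -> sqrt_path q a b -> sqrt_path q' a b.
Proof.
  intros Hqq' [sigma [Hsigma Hend]]. exists sigma. split; [|exact Hend].
  intros t Ht. rewrite <- Hqq' by exact Ht. apply Hsigma, Ht.
Qed.

Lemma sqrt_path_mul_sqr (q g : R -> C) (a b : R) : (a <= b)%R ->
  (forall t, (a <= t <= b)%R -> continuous g t) -> g a * g b = 1 ->
  sqrt_path q a b -> sqrt_path (fun t => q t * (g t * g t)) a b.
Proof.
  intros Hab Hg Hgab [sigma [Hsigma Hend]].
  exists (fun t => sigma t * g t). split.
  - intros t Ht. destruct (Hsigma t Ht) as [Hc Hsq]. split.
    + apply continuous_Cmult; [exact Hc | apply Hg, Ht].
    + rewrite <- Hsq. ring.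
  - transitivity (sigma a * sigma b * (g a * g b)); [ring|].
    rewrite Hend, Hgab. ring.
Qed.

Lemma sqrt_path_step (q q' : R -> C) (a b : R) : (a <= b)%R ->
  (forall t, (a <= t <= b)%R ->
     continuous q t /\ continuous q' t /\ q t <> 0 /\ (0 < Re (q' t / q t))%R) ->
  q a * q b = 1 -> q' a * q' b = 1 ->
  sqrt_path q a b -> sqrt_path q' a b.
Proof.
  intros Hab Hq Hqab Hq'ab [sigma [Hsigma Hend]].
  set (rho := fun t => q' t / q t).
  exists (fun t => sigma t * Csqrt (rho t)). split.
  - intros t Ht. destruct (Hq t Ht) as [Hc [Hc' [Hnz Hre]]].
    destruct (Hsigma t Ht) as [Hsc Hsq]. split.
    + apply continuous_Cmult; [exact Hsc|].
      apply (continuous_comp rho Csqrt); [|apply continuous_Csqrt, Hre].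
      apply continuous_Cdiv; assumption.
    + transitivity (sigma t * sigma t * (Csqrt (rho t) * Csqrt (rho t))); [ring|].
      rewrite Hsq, Csqrt_sqr by exact Hre. unfold rho. field. exact Hnz.
  - destruct (Hq a ltac:(lra)) as [_ [_ [Hqa Hrea]]].
    assert (Hq'a : q' a <> 0).
    { intro E. rewrite E in Hrea. unfold Cdiv in Hrea. rewrite Cmult_0_l in Hrea.
      simpl in Hrea. lra. }
    assert (Hrho_b : rho b = / rho a).
    { unfold rho.
      replace (q b) with (/ q a)
        by (rewrite <- (Cmult_1_r (/ q a)), <- Hqab; field; exact Hqa).
      replace (q' b) with (/ q' a)
        by (rewrite <- (Cmult_1_r (/ q' a)), <- Hq'ab; field; exact Hq'a).
      field. split; assumption. }
    transitivity (sigma a * sigma b * (Csqrt (/ rho a) * Csqrt (rho a))).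
    + rewrite <- Hrho_b. ring.
    + rewrite Hend, Csqrt_inv by exact Hrea. ring.
Qed.

Lemma sqrt_path_homotopy (Q : R -> R -> C) (a b d : R) : (a <= b)%R -> (0 < d)%R ->
  (forall s t, (0 <= s <= 1)%R -> (a <= t <= b)%R ->
     continuous (Q s) t /\ Q s t <> 0) ->
  (forall s, (0 <= s <= 1)%R -> Q s a * Q s b = 1) ->
  (forall s s' t, (0 <= s <= 1)%R -> (0 <= s' <= 1)%R -> (Rabs (s' - s) < d)%R ->
     (a <= t <= b)%R -> (0 < Re (Q s' t / Q s t))%R) ->
  sqrt_path (Q 0%R) a b -> sqrt_path (Q 1%R) a b.
Proof.
  intros Hab Hd HQ Hends Hclose H0.
  assert (Hd' : (0 < 1 / d)%R) by (apply Rdiv_lt_0_compat; lra).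
  destruct (INR_unbounded (1 / d)) as [N HN].
  assert (HNpos : (0 < INR N)%R) by lra.
  assert (Hstep : (1 / INR N < d)%R).
  { replace d with (/ (1 / d))%R by (field; lra).
    unfold Rdiv at 1. rewrite Rmult_1_l.
    apply Rinv_lt_contravar; [apply Rmult_lt_0_compat|]; lra. }
  assert (Hs : forall k, (k <= N)%nat -> (0 <= INR k / INR N <= 1)%R).
  { intros k Hk. apply le_INR in Hk. pose proof (pos_INR k). split.
    - apply Rdiv_le_0_compat; lra.
    - apply (Rmult_le_reg_r (INR N)); [exact HNpos|]. unfold Rdiv.
      rewrite Rmult_assoc, Rinv_l, Rmult_1_r, Rmult_1_l by lra. exact Hk. }
  assert (Hsteps : forall k, (k <= N)%nat -> sqrt_path (Q (INR k / INR N)%R) a b).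
  { induction k as [|k IH]; intros Hk.
    - rewrite Rdiv_0_l. exact H0.
    - assert (Hk' : (k <= N)%nat) by lia.
      apply (sqrt_path_step (Q (INR k / INR N)%R)); auto.
      intros t Ht. destruct (HQ _ t (Hs k Hk') Ht) as [Hc Hnz].
      destruct (HQ _ t (Hs (S k) Hk) Ht) as [Hc' _].
      repeat split; auto. apply Hclose; auto.
      rewrite S_INR.
      replace ((INR k + 1) / INR N - INR k / INR N)%R with (1 / INR N)%R
        by (field; lra).
      rewrite Rabs_pos_eq by (apply Rdiv_le_0_compat; lra). exact Hstep. }
  rewrite <- (Rdiv_diag (INR N)) by lra. apply Hsteps, le_n.
Qed.

Lemma no_sqrt_path_left_half_plane (q : R -> C) (a b : R) : (a <= b)%R ->
  (forall t, (a <= t <= b)%R -> (Re (q t) < 0)%R) -> ~ sqrt_path q a b.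
Proof.
  intros Hab Hq [sigma [Hsigma Hend]].
  assert (Hsign : (0 < Im (sigma a) * Im (sigma b))%R).
  { apply (continuous_sign_constant (fun t => Im (sigma t))); [exact Hab|].
    intros t Ht. destruct (Hsigma t Ht) as [Hc Hsq]. split.
    - apply (continuous_comp sigma Im); [exact Hc | apply continuous_Im].
    - intro E. specialize (Hq t Ht). rewrite <- Hsq in Hq.
      destruct (sigma t) as [x y]. simpl in *. subst y. nra. }
  destruct (Hsigma a ltac:(lra)) as [_ Ha], (Hsigma b ltac:(lra)) as [_ Hb].
  pose proof (Hq a ltac:(lra)) as Hqa. pose proof (Hq b ltac:(lra)) as Hqb.
  rewrite <- Ha in Hqa. rewrite <- Hb in Hqb. apply (f_equal Re) in Hend.
  destruct (sigma a) as [x y], (sigma b) as [x' y']. simpl in *.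
  assert (Hxx' : ((x * x') * (x * x') < (y * y') * (y * y'))%R).
  { replace ((x * x') * (x * x'))%R with ((x * x) * (x' * x'))%R by ring.
    replace ((y * y') * (y * y'))%R with ((y * y) * (y' * y'))%R by ring.
    apply Rmult_le_0_lt_compat; nra. }
  nra.
Qed.

Lemma uniform_ratio_near_1 (F : R * R -> C) (a b a' b' : R) :
  (forall s t, (a <= s <= b)%R -> (a' <= t <= b')%R ->
     continuous F (s, t) /\ F (s, t) <> 0) ->
  exists d : posreal, forall s s' t, (a <= s <= b)%R -> (a' <= t <= b')%R ->
    (Rabs (s' - s) < d)%R -> (Cmod (F (s', t) / F (s, t) - 1) < 1 / 2)%R.
Proof.
  intros HF.
  destruct (lebesgue_number_rectangle a b a' b'
    (fun S => exists m : C,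
       m <> 0 /\ forall p, S p -> (Cmod (F p - m) < Cmod m / 5)%R))
    as [d Hd].
  - intros S S' HS [m [Hm Hnear]]. exists m. auto.
  - intros u v Hu Hv. destruct (HF u v Hu Hv) as [Hc Hnz].
    assert (Hpos : (0 < Cmod (F (u, v)) / 5)%R).
    { apply Cmod_gt_0 in Hnz. lra. }
    destruct (continuous_Cmod_lt F (u, v) (mkposreal _ Hpos) Hc) as [delta Hdelta].
    exists delta. cbv beta. exists (F (u, v)). split; [exact Hnz | exact Hdelta].
  - exists d. intros s s' t Hs Ht Hss'.
    destruct (Hd s t Hs Ht) as [m [Hm Hnear]].
    apply (Cdiv_near_1 m); [exact Hm | apply Hnear | apply Hnear]; split;
      try apply ball_center. exact Hss'.
Qed.

Definition expi (t : R) : C := (cos t, sin t).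

Definition circ (z0 : C) (r t : R) : C := z0 + RtoC r * expi t.

Lemma Cmod_expi (t : R) : Cmod (expi t) = 1%R.
Proof.
  unfold Cmod, expi. simpl. transitivity (sqrt 1); [|apply sqrt_1]. f_equal.
  pose proof (sin2_cos2 t). unfold Rsqr in *. lra.
Qed.

Lemma expi_add_PI (t : R) : expi (t + PI) = - expi t.
Proof.
  unfold expi. rewrite neg_cos, neg_sin.
  apply injective_projections; simpl; ring.
Qed.

Lemma Cmod_circ_sub (z0 : C) (r t : R) : (0 <= r)%R -> Cmod (circ z0 r t - z0) = r.
Proof.
  intros Hr. unfold circ. replace (z0 + RtoC r * expi t - z0) with (RtoC r * expi t)
    by ring.
  rewrite Cmod_mult, Cmod_expi, Cmod_R, Rabs_pos_eq by exact Hr. ring.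
Qed.

Lemma circ_add_PI (z0 : C) (r t : R) : circ z0 r (t + PI) - z0 = - (circ z0 r t - z0).
Proof. unfold circ. rewrite expi_add_PI. ring. Qed.

Lemma circ_PI_PI (z0 : C) (r : R) : circ z0 r (PI + PI) = circ z0 r 0.
Proof.
  unfold circ, expi. replace (PI + PI)%R with (2 * PI)%R by ring.
  rewrite cos_2PI, sin_2PI, cos_0, sin_0. reflexivity.
Qed.

Lemma continuous_circ_polar (z0 : C) (r : R) (p : R * R) :
  continuous (fun p : R * R => circ z0 (fst p * r) (snd p)) p.
Proof.
  destruct p as [s t]. unfold circ, expi.
  apply continuous_Cplus; [apply continuous_const|].
  apply continuous_Cmult.
  - apply continuous_RtoC, continuous_Rmult;
      [apply continuous_fst | apply continuous_const].
  - apply continuous_C; simpl.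
    + apply (continuous_comp snd cos); [apply continuous_snd | apply continuous_cos].
    + apply (continuous_comp snd sin); [apply continuous_snd | apply continuous_sin].
Qed.

Lemma continuous_circ (z0 : C) (r t : R) : continuous (circ z0 r) t.
Proof.
  unfold circ, expi. apply continuous_Cplus; [apply continuous_const|].
  apply continuous_Cmult; [apply continuous_const|].
  apply continuous_C; [apply continuous_cos | apply continuous_sin].
Qed.

Lemma disc_polar_continuous (u : C -> C) (z0 : C) (r s t : R) : (0 <= r)%R ->
  (forall z, (Cmod (z - z0) <= r)%R -> continuous u z /\ u z <> 0) ->
  (0 <= s <= 1)%R ->
  continuous (fun p : R * R => u (circ z0 (fst p * r) (snd p))) (s, t) /\
  continuous (fun t => u (circ z0 (s * r) t)) t /\ u (circ z0 (s * r) t) <> 0.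
Proof.
  intros Hr Hu Hs.
  assert (Hin : (Cmod (circ z0 (s * r) t - z0) <= r)%R)
    by (rewrite Cmod_circ_sub; nra).
  destruct (Hu _ Hin) as [Hc Hnz]. repeat split; [| |exact Hnz].
  - apply (continuous_comp (fun p : R * R => circ z0 (fst p * r) (snd p)) u);
      [apply continuous_circ_polar | exact Hc].
  - apply (continuous_comp (circ z0 (s * r)) u); [apply continuous_circ | exact Hc].
Qed.

(* For any continuous square root [sigma] of the ratio below, [sigma 0 * sigma PI]
   is [1] or [-1]. Shrinking the circle to its centre, where the ratio is [1],
   shows that it is [1], because [u] has no zeros in the disc. *)
Lemma antipodal_ratio_sqrt_path (u : C -> C) (z0 : C) (r : R) : (0 < r)%R ->
  (forall z, (Cmod (z - z0) <= r)%R -> continuous u z /\ u z <> 0) ->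
  sqrt_path (fun t => u (circ z0 r (t + PI)) / u (circ z0 r t)) 0 PI.
Proof.
  intros Hr Hu. pose proof PI_RGT_0 as HPI.
  set (U := fun s t => u (circ z0 (s * r) t)).
  assert (HU := fun s t => disc_polar_continuous u z0 r s t ltac:(lra) Hu).
  set (Q := fun s t => U s (t + PI)%R / U s t).
  destruct (uniform_ratio_near_1 (fun p => U (fst p) (snd p)) 0 1 0 (2 * PI))
    as [d Hd].
  { intros s t Hs _. destruct (HU s t Hs) as [Hc [_ Hnz]]. split; assumption. }
  replace r with (1 * r)%R by ring. change (sqrt_path (Q 1%R) 0 PI).
  apply (sqrt_path_homotopy Q 0 PI d); [lra | apply cond_pos | | | |].
  - intros s t Hs _. destruct (HU s t Hs) as [_ [Hc Hnz]].
    destruct (HU s (t + PI)%R Hs) as [_ [Hc' Hnz']].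
    split; [apply continuous_Cdiv; [apply continuous_shift| |]; assumption|].
    intro E. apply Hnz'. change (U s (t + PI)%R = 0).
    replace (U s (t + PI)%R) with (Q s t * U s t)
      by (unfold Q; field; exact Hnz).
    rewrite E. ring.
  - intros s Hs. unfold Q, U. rewrite Rplus_0_l, circ_PI_PI.
    destruct (HU s 0%R Hs) as [_ [_ H0]], (HU s PI Hs) as [_ [_ HPI']].
    field. split; assumption.
  - intros s s' t Hs Hs' Hss' Ht.
    destruct (HU s t Hs) as [_ [_ N1]], (HU s' t Hs') as [_ [_ N2]].
    destruct (HU s (t + PI)%R Hs) as [_ [_ N3]], (HU s' (t + PI)%R Hs') as [_ [_ N4]].
    replace (Q s' t / Q s t)
      with ((U s' (t + PI)%R / U s (t + PI)%R) / (U s' t / U s t))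
      by (unfold Q; field; repeat split; assumption).
    apply Re_div_pos_near_1;
      [apply (Hd s s' t) | apply (Hd s s' (t + PI)%R)]; simpl; auto; lra.
  - exists (fun _ => 1). split; [|ring]. intros t _. split; [apply continuous_const|].
    unfold Q, U. rewrite Rmult_0_l.
    replace (circ z0 0 (t + PI)) with (circ z0 0 t)
      by (unfold circ; rewrite !Cmult_0_l; ring).
    field. apply Hu. rewrite Cmod_circ_sub; lra.
Qed.

Lemma square_multiple_not_near_identity (z0 : C) (r : R) (u F : C -> C) :
  (0 < r)%R ->
  (forall z, (Cmod (z - z0) <= r)%R -> continuous u z /\ u z <> 0) ->
  (forall z, (Cmod (z - z0) <= r)%R -> continuous F z) ->
  ~ (forall t, (0 <= t <= 2 * PI)%R ->
       (Cmod (u (circ z0 r t) * (F (circ z0 r t) * F (circ z0 r t))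
              - (circ z0 r t - z0)) < r / 2)%R).
Proof.
  intros Hr Hu HF Happ. pose proof PI_RGT_0 as HPI.
  set (c := circ z0 r) in *. set (G := fun z => u z * (F z * F z)).
  assert (Hon : forall t, Cmod (c t - z0) = r)
    by (intro t; unfold c; rewrite Cmod_circ_sub; lra).
  assert (Hv : forall t, c t - z0 <> 0)
    by (intros t E; specialize (Hon t); rewrite E, Cmod_0 in Hon; lra).
  assert (Hnear : forall t, (0 <= t <= 2 * PI)%R ->
    (Cmod (G (c t) / (c t - z0) - 1) < 1 / 2)%R).
  { intros t Ht. apply Cdiv_sub_1_lt_half. rewrite Hon. apply Happ, Ht. }
  assert (HFnz : forall t, (0 <= t <= 2 * PI)%R -> F (c t) <> 0).
  { intros t Ht E. specialize (Hnear t Ht). unfold G in Hnear. rewrite E in Hnear.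
    replace (u (c t) * (0 * 0) / (c t - z0) - 1) with (- (1)) in Hnear
      by (field; apply Hv).
    rewrite Cmod_opp, Cmod_1 in Hnear. lra. }
  assert (Hunz : forall t, u (c t) <> 0) by (intro t; apply Hu; rewrite Hon; lra).
  assert (HFc : forall t, continuous (fun t => F (c t)) t).
  { intros t. apply (continuous_comp c F); [apply continuous_circ | apply HF].
    rewrite Hon. lra. }
  apply (no_sqrt_path_left_half_plane (fun t => G (c (t + PI)%R) / G (c t)) 0 PI);
    [lra | |].
  - intros t Ht. apply (Re_div_neg_near_opposite _ _ (c t - z0) (Hv t));
      [apply Hnear; lra|].
    pose proof (circ_add_PI z0 r t) as Hopp. fold c in Hopp.
    rewrite <- Hopp. apply Hnear. lra.
  - set (g := fun t => F (c (t + PI)%R) / F (c t)).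
    apply (sqrt_path_ext (fun t => u (c (t + PI)%R) / u (c t) * (g t * g t))).
    { intros t Ht. unfold g, G. field. repeat split; auto; apply HFnz; lra. }
    apply sqrt_path_mul_sqr; [lra | | |apply antipodal_ratio_sqrt_path; assumption].
    + intros t Ht. apply continuous_Cdiv;
        [apply (continuous_shift (fun t => F (c t))), HFc | apply HFc
        | apply HFnz; lra].
    + unfold g. rewrite Rplus_0_l. unfold c. rewrite circ_PI_PI. fold c.
      field. split; apply HFnz; lra.
Qed.

Lemma wcomp_iter (w phi h : C -> C) (n : nat) (z : C) :
  Nat.iter n (wcomp w phi) h z =
  Nat.iter n (wcomp w phi) (fun _ => 1) z * h (Nat.iter n phi z).
Proof.
  revert z. induction n as [|n IH]; intros z; simpl; [ring|].
  unfold wcomp at 1 3. rewrite IH, <- Nat.iter_succ_r. simpl. ring.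
Qed.

Section Iterates.

Variables (Omega : C -> Prop) (w phi : C -> C).
Hypothesis phi_maps : forall z, Omega z -> Omega (phi z) /\ continuous phi z.
Hypothesis w_nonvanishing : forall z, Omega z -> continuous w z /\ w z <> 0.

Lemma iter_maps_continuous (n : nat) (z : C) :
  Omega z -> Omega (Nat.iter n phi z) /\ continuous (Nat.iter n phi) z.
Proof.
  induction n as [|n IH]; intros Hz; simpl.
  { split; [exact Hz | apply continuous_id]. }
  destruct (IH Hz) as [Hin Hc]. destruct (phi_maps _ Hin) as [Hin' Hc'].
  split; [exact Hin' | apply (continuous_comp (Nat.iter n phi) phi); assumption].
Qed.

Lemma wcomp_iter_weight (n : nat) (z : C) : Omega z ->
  continuous (Nat.iter n (wcomp w phi) (fun _ => 1)) z /\
  Nat.iter n (wcomp w phi) (fun _ => 1) z <> 0.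
Proof.
  revert z. induction n as [|n IH]; intros z Hz; simpl.
  - split; [apply continuous_const | apply C1_nz].
  - destruct (w_nonvanishing z Hz) as [Hwc Hwz]. destruct (phi_maps z Hz) as [Hin Hc].
    destruct (IH _ Hin) as [Hc' Hnz']. unfold wcomp. split.
    + apply continuous_Cmult; [exact Hwc|].
      apply (continuous_comp phi (Nat.iter n (wcomp w phi) (fun _ => 1)));
        assumption.
    + apply Cmult_neq_0; assumption.
Qed.

End Iterates.

Lemma holomorphic_on_affine (D : C -> Prop) (c p k : C) :
  holomorphic_on D (fun z => c + (z - p) * k).
Proof.
  intros z _.
  apply (ex_derive_plus (K := C_AbsRing) (V := C_NormedModule) (fun _ => c)).
  - apply ex_derive_const.
  - apply (ex_derive_scal_l (K := C_AbsRing) (V := C_NormedModule) (fun z => z - p)).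
    apply (ex_derive_plus (K := C_AbsRing) (V := AbsRing_NormedModule C_AbsRing)
      (fun z => z) (fun _ => - p)); [apply ex_derive_id | apply ex_derive_const].
Qed.

Lemma scaled_pair_not_near (a b lam : C) :
  (Cmod (lam * a - 1) < 1 / 2)%R ->
  ~ (Cmod (lam * b - RtoC (2 * Cmod b / Cmod a + 1)) < 1 / 2)%R.
Proof.
  intros Ha Hb.
  assert (Ha0 : a <> 0).
  { intro E. rewrite E, Cmult_0_r in Ha.
    replace (0 - 1) with (- (1)) in Ha by ring. rewrite Cmod_opp, Cmod_1 in Ha. lra. }
  apply Cmod_gt_0 in Ha0. pose proof (Cmod_ge_0 b) as Hb0.
  set (M := (2 * Cmod b / Cmod a + 1)%R) in *.
  assert (HM : (1 <= M)%R).
  { unfold M. pose proof (Rdiv_le_0_compat (2 * Cmod b) _ ltac:(lra) Ha0). lra. }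
  assert (Hlam : (Cmod lam * Cmod a < 3 / 2)%R).
  { rewrite <- Cmod_mult. pose proof (Cmod_triangle (lam * a - 1) 1) as Htri.
    replace (lam * a - 1 + 1) with (lam * a) in Htri by ring.
    rewrite Cmod_1 in Htri. lra. }
  assert (Hlamb : (Cmod (lam * b) <= 2 * Cmod b / Cmod a)%R).
  { rewrite Cmod_mult. apply (Rmult_le_reg_r (Cmod a)); [exact Ha0|].
    replace (2 * Cmod b / Cmod a * Cmod a)%R with (2 * Cmod b)%R by (field; lra).
    nra. }
  pose proof (Cmod_triangle (RtoC M - lam * b) (lam * b)) as Htri.
  replace (RtoC M - lam * b + lam * b) with (RtoC M) in Htri by ring.
  replace (RtoC M - lam * b) with (- (lam * b - RtoC M)) in Htri by ring.
  rewrite Cmod_opp, Cmod_R, Rabs_pos_eq in Htri by lra.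
  unfold M in *. lra.
Qed.

Lemma wcomp_weight_zero_not_supercyclic (Omega : C -> Prop) (w phi f : C -> C)
    (p : C) :
  open Omega -> Omega p -> w p = 0 -> ~ supercyclic Omega (wcomp w phi) f.
Proof.
  intros Hopen Hp Hwp Hsc.
  destruct (open_Cmod_ball Omega p Hopen Hp) as [rho [Hrho Hball]].
  set (q := p + RtoC (rho / 2)).
  assert (Hqp : q - p <> 0).
  { unfold q. replace (p + RtoC (rho / 2) - p) with (RtoC (rho / 2)) by ring.
    intro E. apply RtoC_inj in E. lra. }
  assert (Hq : Omega q).
  { apply Hball. unfold q.
    replace (p + RtoC (rho / 2) - p) with (RtoC (rho / 2)) by ring.
    rewrite Cmod_R, Rabs_pos_eq; lra. }
  assert (Hpq : forall z, z = p \/ z = q -> Omega z)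
    by (intros z [-> | ->]; assumption).
  set (M := RtoC (2 * Cmod (f q) / Cmod (f p) + 1)).
  destruct (Hsc (fun z => 1 + (z - p) * ((M - 1) / (q - p)))
    (holomorphic_on_affine _ _ _ _) _ (compact_set_pair p q) Hpq (1 / 2)%R ltac:(lra))
    as [lam [n Hn]].
  pose proof (Hn p (or_introl eq_refl)) as Hnp.
  pose proof (Hn q (or_intror eq_refl)) as Hnq.
  replace (1 + (p - p) * ((M - 1) / (q - p))) with (RtoC 1) in Hnp by ring.
  replace (1 + (q - p) * ((M - 1) / (q - p))) with M in Hnq by (field; exact Hqp).
  destruct n as [|n].
  - exact (scaled_pair_not_near (f p) (f q) lam Hnp Hnq).
  - simpl in Hnp. unfold wcomp at 1 in Hnp. rewrite Hwp in Hnp.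
    replace (lam * (0 * Nat.iter n (wcomp w phi) f (phi p)) - 1) with (- (1)) in Hnp
      by ring.
    rewrite Cmod_opp, Cmod_1 in Hnp. lra.
Qed.

Lemma wcomp_square_not_supercyclic (Omega : C -> Prop) (w phi f : C -> C) (z0 : C) :
  open Omega -> Omega z0 ->
  (forall z, Omega z -> Omega (phi z) /\ continuous phi z) ->
  (forall z, Omega z -> continuous w z /\ w z <> 0) ->
  (forall z, Omega z -> continuous f z) ->
  ~ supercyclic Omega (wcomp w phi) (fun z => f z * f z).
Proof.
  intros Hopen Hz0 Hphi Hw Hf Hsc. pose proof PI_RGT_0 as HPI.
  destruct (open_Cmod_ball Omega z0 Hopen Hz0) as [rho [Hrho Hball]].
  set (r := (rho / 2)%R). assert (Hr : (0 < r)%R) by (unfold r; lra).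
  assert (Hdisk : forall z, (Cmod (z - z0) <= r)%R -> Omega z)
    by (intros z Hz; apply Hball; unfold r in Hz; lra).
  set (K := fun z => exists t, (0 <= t <= 2 * PI)%R /\ z = circ z0 r t).
  assert (HK : compact_set K).
  { apply compact_set_image_interval; [lra | intros; apply continuous_circ]. }
  assert (HKO : forall z, K z -> Omega z).
  { intros z [t [_ ->]]. apply Hdisk. rewrite Cmod_circ_sub; lra. }
  destruct (Hsc (fun z => 0 + (z - z0) * 1) (holomorphic_on_affine _ _ _ _) K HK HKO
    (r / 2)%R ltac:(lra)) as [lam [n Hn]].
  set (W := Nat.iter n (wcomp w phi) (fun _ => 1)).
  assert (Hlam : lam <> 0).
  { intros E.
    assert (HK0 : K (circ z0 r 0)) by (exists 0%R; split; [lra | reflexivity]).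
    specialize (Hn _ HK0). rewrite E in Hn.
    replace (0 * _ - _) with (- (circ z0 r 0 - z0)) in Hn by ring.
    rewrite Cmod_opp, Cmod_circ_sub in Hn; lra. }
  apply (square_multiple_not_near_identity z0 r (fun z => lam * W z)
    (fun z => f (Nat.iter n phi z)) Hr).
  - intros z Hz. destruct (wcomp_iter_weight Omega w phi Hphi Hw n z (Hdisk z Hz))
      as [Hc Hnz].
    split; [apply continuous_Cmult; [apply continuous_const | exact Hc]|].
    apply Cmult_neq_0; assumption.
  - intros z Hz. destruct (iter_maps_continuous Omega phi Hphi n z (Hdisk z Hz))
      as [Hin Hc].
    apply (continuous_comp (Nat.iter n phi) f); [exact Hc | apply Hf, Hin].
  - intros t Ht. specialize (Hn (circ z0 r t) (ex_intro _ t (conj Ht eq_refl))).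
    rewrite wcomp_iter in Hn. fold W in Hn. eapply Rle_lt_trans; [|exact Hn].
    right. f_equal. ring.
Qed.

Theorem theorem22 (Omega : C -> Prop) (w phi : C -> C) :
  is_domain Omega ->
  holomorphic_on Omega w ->
  holomorphic_on Omega phi ->
  (forall z, Omega z -> Omega (phi z)) ->
  ~ supports_supercyclic_algebra Omega (wcomp w phi).
Proof.
  intros [Hopen [_ [z0 Hz0]]] Hw Hphi Hmaps
    [A [[HAhol [_ [_ [_ HAmul]]]] [[f [HAf Hfnz]] HAsc]]].
  destruct (classic (exists p, Omega p /\ w p = 0)) as [[p [Hp Hwp]] | Hnozero].
  - exact (wcomp_weight_zero_not_supercyclic Omega w phi f p Hopen Hp Hwp
      (HAsc f HAf Hfnz)).
  - apply (wcomp_square_not_supercyclic Omega w phi f z0 Hopen Hz0).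
    + intros z Hz. split; [apply Hmaps, Hz | apply holomorphic_continuous, Hphi, Hz].
    + intros z Hz. split; [apply holomorphic_continuous, Hw, Hz|].
      intros E. apply Hnozero. exists z. split; assumption.
    + intros z Hz. apply holomorphic_continuous, (HAhol f HAf), Hz.
    + apply HAsc; [apply HAmul; exact HAf|].
      destruct Hfnz as [z [Hz Hfz]]. exists z. split; [exact Hz|].
      apply Cmult_neq_0; exact Hfz.
Qed.
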